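(* Let $G$ be a map graph with a corresponding planar bipartite graph $B$, let $k$ be a positive integer, let $\mathcal{D}=(T,\beta_{\mathcal{D}})$ be a nice tree decomposition of $B$ of width less than $5\sqrt{2k}$, and let $\mathcal{D}'=(T,\beta_{\mathcal{D}'})$ be the tree decomposition of $G$ derived from $\mathcal{D}$. Let $C$ be a cycle in $G$. Then there is a cycle $C'$ in $G$ of the same length as $C$ such that for every node $t\in V(T)$, the number of edges of $C'$ with one endpoint in $\beta_{\mathcal{D}'}(t)$ and the other in $V(G)\setminus\gamma_{\mathcal{D}'}(t)$ is at most $20\sqrt{2k}$.
   Context: All graphs are finite and simple. For a bipartite graph $B$ with bipartition $V(B)=W\uplus U$, the half-square of $B$ is the graph on $W$ in which two vertices are adjacent iff they are at distance exactly $2$ in $B$. A graph $G$ is a map graph iff it is the half-square of some planar bipartite graph $B$; such $B$ (with $W=V(G)$) is a corresponding planar bipartite graph, and $S(G)=U$ is the set of special vertices. A tree decomposition $(T,\beta)$: rooted tree, bags covering all vertices and edges, each vertex's nodes inducing a connected subtree; width is max bag size minus one. $\gamma_{\mathcal{D}}(t)$ (resp. $\gamma_{\mathcal{D}'}(t)$) is the union of bags at $t$ and its descendants. A nice tree decomposition has empty root bag and leaf, introduce, forget and join nodes in the standard sense. The decomposition derived from $\mathcal{D}$ has the same tree and bags $\beta_{\mathcal{D}'}(t)=(\beta_{\mathcal{D}}(t)\cap V(G))\cup\bigcup_{s\in\beta_{\mathcal{D}}(t)\cap S(G)}(N_B(s)\cap\gamma_{\mathcal{D}}(t))$. *)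

From HB Require Import structures.
From mathcomp Require Import all_boot all_order all_algebra.
From mathcomp Require Import all_classical all_reals all_analysis.
Set Implicit Arguments. Unset Strict Implicit. Unset Printing Implicit Defensive.
Import Order.TTheory GRing.Theory Num.Theory numFieldNormedType.Exports.
Local Open Scope ring_scope.

Definition simple_graph (V : finType) (e : rel V) : Prop :=
  symmetric e /\ irreflexive e.

Definition bipE (W U : finType) (r : W -> U -> bool) : rel (W + U)%type :=
  fun a b => match a, b with
             | inl w, inr u => r w u
             | inr u, inl w => r w u
             | _, _ => false
             end.

Definition dist2 (V : finType) (e : rel V) (x y : V) : bool :=
  [&& x != y, ~~ e x y & [exists z, e x z && e z y]].

Definition half_square (W U : finType) (r : W -> U -> bool) : rel W :=
  fun x y => dist2 (bipE r) (inl x) (inl y).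

(** G is the map graph whose corresponding bipartite graph is B = (W ⊎ U, r). *)
Definition is_half_square_of (W U : finType) (G : rel W) (r : W -> U -> bool) :=
  forall x y, G x y = half_square r x y.

(** * Planarity: a drawing in the plane R^2 with vertices as distinct points
    and edges as arcs (injective continuous images of [0,1], parametrised by
    continuous maps R -> R^2 restricted to [0,1]) joining their endpoints,
    whose interiors avoid all vertex points and the interiors of other arcs. *)
Definition unit_int (R : realType) (s : R) : Prop := 0 <= s <= 1.
Definition open_unit_int (R : realType) (s : R) : Prop := 0 < s < 1.

Definition planar (R : realType) (V : finType) (e : rel V) : Prop :=
  exists (p : V -> R * R) (arc : V -> V -> R -> R * R),
    [/\ injective p,
        (forall x y, e x y ->
           [/\ continuous (arc x y),
               arc x y 0 = p x, arc x y 1 = p y,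
               (forall s t, unit_int s -> unit_int t -> arc x y s = arc x y t -> s = t)
             & (forall s, arc y x s = arc x y (1 - s))]),
        (forall x y z s, e x y -> open_unit_int s -> arc x y s <> p z)
      & (forall x y x' y' s t, e x y -> e x' y' ->
           ~ ((x = x' /\ y = y') \/ (x = y' /\ y = x')) ->
           open_unit_int s -> open_unit_int t -> arc x y s <> arc x' y' t)].

Definition parent_rel (N : finType) (root : N) (par : N -> N) : rel N :=
  fun a b => (a != root) && (par a == b).

Definition rooted_tree (N : finType) (root : N) (par : N -> N) : Prop :=
  par root = root /\ forall t, connect (parent_rel root par) t root.

(** s is a descendant of t (t itself included). *)
Definition descendant (N : finType) (root : N) (par : N -> N) (s t : N) : bool :=
  connect (parent_rel root par) s t.

Definition tree_adj (N : finType) (root : N) (par : N -> N) : rel N :=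
  fun a b => parent_rel root par a b || parent_rel root par b a.

Definition children (N : finType) (root : N) (par : N -> N) (t : N) : {set N} :=
  [set s | parent_rel root par s t].

Definition tree_decomposition (V N : finType) (e : rel V)
    (root : N) (par : N -> N) (beta : N -> {set V}) : Prop :=
  [/\ rooted_tree root par,
      (forall v, exists t, v \in beta t),
      (forall x y, e x y -> exists t, (x \in beta t) && (y \in beta t))
    & (forall v s t, v \in beta s -> v \in beta t ->
         connect [rel a b | [&& tree_adj root par a b, v \in beta a & v \in beta b]] s t)].

Definition gamma (V N : finType) (root : N) (par : N -> N) (beta : N -> {set V})
    (t : N) : {set V} :=
  \bigcup_(s | descendant root par s t) beta s.

Definition td_width (V N : finType) (beta : N -> {set V}) : int :=
  (\max_(t : N) #|beta t|)%:Z - 1.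

Definition nice_td (V N : finType) (e : rel V)
    (root : N) (par : N -> N) (beta : N -> {set V}) : Prop :=
  [/\ tree_decomposition e root par beta,
      beta root = finset.set0
    & forall t,
      [\/ children root par t = finset.set0 /\ beta t = finset.set0,
          exists s v, [/\ children root par t = [set s], v \notin beta s
                        & beta t = v |: beta s],
          exists s v, [/\ children root par t = [set s], v \in beta s
                        & beta t = beta s :\ v]
        | exists s1 s2, [/\ s1 != s2, children root par t = [set s1; s2],
                           beta t = beta s1 & beta t = beta s2]]].

Definition derived_bag (W U N : finType) (r : W -> U -> bool)
    (root : N) (par : N -> N) (beta : N -> {set (W + U)%type}) (t : N) : {set W} :=
  [set w | inl w \in beta t] :|:
  [set w | [exists u, [&& inr u \in beta t, r w u & inl w \in gamma root par beta t]]].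

(** A cycle in a graph: a duplicate-free cyclic sequence of >= 3 vertices,
    consecutive ones adjacent; its length is its size. *)
Definition is_cycle (V : finType) (e : rel V) (c : seq V) : bool :=
  (2 < size c)%N && ucycleb e c.

Definition crossing_edges (V : finType) (c : seq V) (A Bset : {set V}) : nat :=
  count (fun x => ((x \in A) && (next c x \notin Bset))
                  || ((next c x \in A) && (x \notin Bset))) c.

From HB Require Import structures.
From mathcomp Require Import all_boot all_order all_algebra.
From mathcomp Require Import all_classical all_reals all_analysis.
From mathcomp Require Import zify lra.
Import Order.TTheory GRing.Theory Num.Theory.
Set Implicit Arguments. Unset Strict Implicit. Unset Printing Implicit Defensive.

(* Give every vertex x of G a home node pos x of the tree whose bag contains
   x, and weigh a pair of vertices by the tree distance between their homes.
   Take a cycle C' of G of the given length with minimal total edge weight.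
   An edge of C' crossing the boundary of the subtree of t either has an
   endpoint in the bag of t, or the special vertex witnessing it lies in the
   bag of t.  Two edges crossing in the same direction cannot share their
   witness u: their four endpoints are pairwise adjacent to u, hence adjacent
   in G, and exchanging the two edges for the other two (a 2-opt move)
   strictly decreases the weight, by a four-point inequality for the tree
   distance.  So at most 2|beta(t)| edges of C' cross, and the width bound
   gives 2|beta(t)| <= 20 sqrt(2k). *)

Section CycleRewiring.
Variable T : eqType.

Lemma next_cat_cons (p : seq T) x q :
  uniq (p ++ x :: q) -> next (p ++ x :: q) x = head (head x p) q.
Proof.
move=> /cycle_next; set n := next _.
case: p n => [|a p] n.
  by rewrite [cycle _ _]/=; case: q n => [|y q] n /andP[/eqP].
rewrite cat_cons [cycle _ _]/= rcons_cat cat_path => /andP[_] /=.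
by case: q n => [|y q] n /and3P[_ /eqP].
Qed.

Lemma rot_to_two_edges (c : seq T) x1 x2 :
  uniq c -> x1 \in c -> x2 \in c -> x1 != x2 ->
  next c x1 != x2 -> next c x2 != x1 ->
  exists i p q, rot i c = [:: x1, next c x1 & p ++ [:: x2, next c x2 & q]].
Proof.
move=> U /rot_to[i s E] x2c x12.
have Ur : uniq (x1 :: s) by rewrite -E rot_uniq.
have x2s : x2 \in s by move: x2c; rewrite -(mem_rot i) E inE eq_sym (negbTE x12).
case/splitPr: x2s E Ur => p0 s' E Ur.
have nE : next c =1 next (x1 :: p0 ++ x2 :: s') by move=> y; rewrite -E next_rot.
rewrite !nE (next_cat_cons (p := [::]) Ur) (next_cat_cons (p := x1 :: p0) Ur) /=.
case: p0 {nE} E Ur => [|y1 p] E Ur /=; first by rewrite eqxx.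
case: s' E Ur => [|y2 q] E Ur /=; first by rewrite eqxx.
by move=> _ _; exists i, p, q.
Qed.

Lemma path_rcons_rev (G : rel T) : symmetric G ->
  forall x p y, path G x (rcons p y) = path G y (rcons (rev p) x).
Proof.
move=> Gsym x p y; have := rev_path G x (rcons p y).
rewrite last_rcons belast_rcons rev_cons => ->.
by apply: eq_path => a b; rewrite /= Gsym.
Qed.

Variable w : T -> T -> nat.
Hypothesis wC : forall x y, w x y = w y x.

Fixpoint path_weight (x : T) (s : seq T) : nat :=
  if s is y :: s' then w x y + path_weight y s' else 0.

Definition cycle_weight (c : seq T) : nat := \sum_(x <- c) w x (next c x).

Lemma path_weight_cat x s1 s2 :
  path_weight x (s1 ++ s2) = path_weight x s1 + path_weight (last x s1) s2.
Proof. by elim: s1 x => [|y s IH] x //=; rewrite IH addnA. Qed.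

Lemma path_weight_rcons x s y :
  path_weight x (rcons s y) = path_weight x s + w (last x s) y.
Proof. by rewrite -cats1 path_weight_cat /= addn0. Qed.

Lemma path_weight_rev x s y :
  path_weight x (rcons s y) = path_weight y (rcons (rev s) x).
Proof.
elim: s x => [|z s IH] x /=; first by rewrite wC.
by rewrite IH rev_cons [in RHS]path_weight_rcons last_rcons addnC wC.
Qed.

Lemma path_weight_fpath (f : T -> T) x s :
  fpath f x s -> \sum_(y <- belast x s) w y (f y) = path_weight x s.
Proof.
elim: s x => [|y s IH] x /=; first by rewrite big_nil.
by case/andP=> /eqP <- /IH; rewrite big_cons => ->.
Qed.

Lemma cycle_weight_cons x s :
  uniq (x :: s) -> cycle_weight (x :: s) = path_weight x (rcons s x).
Proof.
by move=> U; rewrite -(path_weight_fpath (cycle_next U)) belast_rcons.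
Qed.

Lemma cycle_weight_rot n c : uniq c -> cycle_weight (rot n c) = cycle_weight c.
Proof.
move=> U; rewrite /cycle_weight (eq_bigr (fun x => w x (next c x))).
  by apply: perm_big; rewrite perm_rot.
by move=> x _; rewrite next_rot.
Qed.

Section TwoOpt.
Variables (x1 y1 x2 y2 : T) (p q : seq T).
Let c := [:: x1, y1 & p ++ [:: x2, y2 & q]].
Let c2 := [:: x1, x2 & rev p ++ [:: y1, y2 & q]].

Lemma perm_two_opt : perm_eq c2 c.
Proof. by apply/permP => a; rewrite /c /c2 /= !count_cat /= count_rev; lia. Qed.

Lemma cycle_two_opt (G : rel T) : symmetric G ->
  cycle G c -> G x1 x2 -> G y1 y2 -> cycle G c2.
Proof.
move=> Gsym; rewrite /c /c2 /= !rcons_cat !cat_path /=.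
case/and3P=> _ P1 /and3P[G1 _ P2] -> Gy.
have := rcons_path G y1 p x2; rewrite P1 G1 (path_rcons_rev Gsym) rcons_path.
by case/andP=> -> ->; rewrite Gy P2.
Qed.

Lemma cycle_weight_two_opt : uniq c ->
  cycle_weight c2 + w x1 y1 + w x2 y2 = cycle_weight c + w x1 x2 + w y1 y2.
Proof.
move=> U; have U2 : uniq c2 by rewrite (perm_uniq perm_two_opt).
have := path_weight_rev y1 p x2; rewrite !path_weight_rcons.
rewrite !cycle_weight_cons // /= !rcons_cat !path_weight_cat /=; lia.
Qed.
End TwoOpt.

Lemma two_opt_exchange (G : rel T) c x1 x2 : symmetric G ->
  uniq c -> cycle G c -> x1 \in c -> x2 \in c -> x1 != x2 ->
  next c x1 != x2 -> next c x2 != x1 -> G x1 x2 -> G (next c x1) (next c x2) ->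
  exists2 c2, [/\ uniq c2, cycle G c2 & size c2 = size c] &
    cycle_weight c2 + w x1 (next c x1) + w x2 (next c x2) =
    cycle_weight c + w x1 x2 + w (next c x1) (next c x2).
Proof.
move=> Gsym U C x1c x2c x12 n1 n2 Gx Gy.
have [i [p [q E]]] := rot_to_two_edges U x1c x2c x12 n1 n2.
have Ur : uniq (rot i c) by rewrite rot_uniq.
have Pr := perm_two_opt x1 (next c x1) x2 (next c x2) p q; rewrite -E in Pr.
exists [:: x1, x2 & rev p ++ [:: next c x1, next c x2 & q]].
  split; first by rewrite (perm_uniq Pr).
    by apply: cycle_two_opt => //; rewrite -E rot_cycle.
  by rewrite (perm_size Pr) size_rot.
by rewrite cycle_weight_two_opt -E ?cycle_weight_rot.
Qed.
End CycleRewiring.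

Section RootedTree.
Variables (N : finType) (root : N) (par : N -> N).
Local Notation desc := (descendant root par).

Lemma tree_adj_exit a b t :
  desc a t -> ~~ desc b t -> tree_adj root par a b -> a = t.
Proof.
move=> at_ bt /orP[] /andP[a_root /eqP pa].
  case/connectP: at_ => [[|z p]] /= pP; first by move=> ->.
  case/andP: pP => /andP[_ /eqP pz] zp tE.
  by case/negP: bt; rewrite -pa pz; apply/connectP; exists p.
case/negP: bt; apply: connect_trans at_; apply: connect1.
by rewrite /parent_rel a_root pa eqxx.
Qed.

Lemma connect_exit (P : pred N) a b t :
  connect [rel x y | [&& tree_adj root par x y, P x & P y]] a b ->
  desc a t -> ~~ desc b t -> P t.
Proof.
case/connectP=> p; elim: p a => [|z p IH] a /=; first by move=> _ -> at_ /negP[].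
case/andP=> /and3P[adj Pa _] zp bE at_ bt.
have [zt|zt] := boolP (desc z t); first exact: IH zp bE zt bt.
by rewrite -(tree_adj_exit at_ zt adj).
Qed.

Lemma descendant_comparable a t t' :
  desc a t -> desc a t' -> desc t t' || desc t' t.
Proof.
case/connectP=> p; elim: p a t' => [|z p IH] a t' /=; first by move=> _ -> ->.
case/andP=> /andP[a_root /eqP pz] zp tE.
case/connectP=> [[|z' p']] /= p'P.
  move=> ->; apply/orP; right; apply/connectP; exists (z :: p) => //=.
  by rewrite zp /parent_rel a_root pz eqxx.
move=> t'E; case/andP: p'P => /andP[_ /eqP pz'] p'P.
by apply: (IH z t' zp tE); apply/connectP; exists p'; rewrite // -pz pz'.
Qed.

Lemma subtree_nested a b t t' :
  desc a t -> ~~ desc b t -> desc a t' -> desc b t' -> desc t t'.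
Proof.
move=> at_ bt at' bt'; case/orP: (descendant_comparable at_ at') => // t't.
by case/negP: bt; apply: connect_trans bt' t't.
Qed.

(* The subtrees of the non-root nodes separating a from b are those whose
   top edge lies on the tree path from a to b. *)
Definition tree_dist (a b : N) : nat := \sum_(t : N) (desc a t != desc b t).

Lemma tree_distC a b : tree_dist a b = tree_dist b a.
Proof. by apply: eq_bigr => t _; rewrite eq_sym. Qed.

Lemma tree_dist_exchange a1 a2 b1 b2 t :
  desc a1 t -> desc a2 t -> ~~ desc b1 t -> ~~ desc b2 t ->
  tree_dist a1 a2 + tree_dist b1 b2 < tree_dist a1 b1 + tree_dist a2 b2.
Proof.
move=> a1t a2t b1t b2t; rewrite /tree_dist -!big_split /=.
rewrite (bigD1 t) //= [X in _ < X](bigD1 t) //= a1t a2t (negbTE b1t) (negbTE b2t).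
rewrite ltnS (leq_trans _ (leq_addl 1 _)) // leq_sum // => t' _.
have nest1 : desc a1 t' -> desc b1 t' -> desc a2 t'.
  by move=> a1t' b1t'; apply: connect_trans a2t (subtree_nested a1t b1t a1t' b1t').
have nest2 : desc a2 t' -> desc b2 t' -> desc a1 t'.
  by move=> a2t' b2t'; apply: connect_trans a1t (subtree_nested a2t b2t a2t' b2t').
case: (desc a1 t') (desc a2 t') (desc b1 t') (desc b2 t') nest1 nest2
  => [] [] [] [] nest1 nest2 //=; by [have := nest1 isT isT | have := nest2 isT isT].
Qed.

End RootedTree.

Section TreeDecomposition.
Variables (V N : finType) (e : rel V) (root : N) (par : N -> N) (beta : N -> {set V}).
Hypothesis td : tree_decomposition e root par beta.
Local Notation desc := (descendant root par).
Local Notation gam := (gamma root par beta).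

Lemma gammaP v t : reflect (exists2 s, desc s t & v \in beta s) (v \in gam t).
Proof. by apply: (iffP bigcupP) => -[s]; exists s. Qed.

Lemma bag_sub_gamma v t : v \in beta t -> v \in gam t.
Proof. by move=> vt; apply/gammaP; exists t; first exact: connect0. Qed.

Lemma bag_separates v a b t :
  v \in beta a -> v \in beta b -> desc a t -> ~~ desc b t -> v \in beta t.
Proof.
case: td => _ _ _ bag_connected va vb.
exact: (connect_exit (P := fun s => v \in beta s) (bag_connected v a b va vb)).
Qed.

Definition home (v : V) : N := odflt root [pick t | v \in beta t].

Lemma home_bag v : v \in beta (home v).
Proof.
rewrite /home; case: pickP => [t //|none].
by case: td => _ /(_ v)[t]; rewrite none.
Qed.

Lemma home_desc v t : v \in gam t -> v \notin beta t -> desc (home v) t.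
Proof.
case/gammaP=> s st vs; apply: contraNT => ht.
exact: bag_separates vs (home_bag v) st ht.
Qed.

Lemma home_ndesc v t : v \notin gam t -> ~~ desc (home v) t.
Proof. by apply: contra => ht; apply/gammaP; exists (home v); rewrite ?home_bag. Qed.

Lemma gamma_edge x z t : x \in gam t -> x \notin beta t -> e x z -> z \in gam t.
Proof.
move=> xg xt; case: td => _ _ edge_cov _ /edge_cov[s /andP[xs zs]].
apply/gammaP; exists s => //.
apply: contraNT (xt) => st; exact: bag_separates (home_bag x) xs (home_desc xg xt) st.
Qed.

Lemma common_neighbour_in_bag a b u t :
  a \in gam t -> a \notin beta t -> b \notin gam t -> e a u -> e u b -> u \in beta t.
Proof.
move=> ag at_ bg au ub; apply: contraNT bg => ut.
exact: gamma_edge (gamma_edge ag at_ au) ut ub.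
Qed.
End TreeDecomposition.

Section DerivedDecomposition.
Variables (W U N : finType) (r : W -> U -> bool).
Variables (root : N) (par : N -> N) (beta : N -> {set (W + U)%type}).
Local Notation gam := (gamma root par beta).
Local Notation dbag := (derived_bag r root par beta).

Lemma gamma_derived_bag t : gamma root par dbag t = [set w | inl w \in gam t].
Proof.
apply/setP => w; rewrite inE; apply/bigcupP/gammaP => -[s st].
  rewrite !inE => /orP[ws | /existsP[u /and3P[_ _ /gammaP[s' s's ws']]]].
    by exists s.
  by exists s' => //; apply: connect_trans s's st.
by move=> ws; exists s; rewrite // !inE ws.
Qed.

Lemma derived_bag_sub_gamma w t : w \in dbag t -> inl w \in gam t.
Proof.
by move=> wt; have := bag_sub_gamma root par wt; rewrite gamma_derived_bag inE.
Qed.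
End DerivedDecomposition.

Lemma half_squareP (W U : finType) (r : W -> U -> bool) x y :
  reflect (x != y /\ exists u, r x u && r y u) (half_square r x y).
Proof.
rewrite /half_square /dist2 /= (inj_eq inl_inj).
apply: (iffP andP) => [[xy /existsP[[w|u]]] | [xy [u xyu]]] //.
  by split=> //; exists u.
by split=> //; apply/existsP; exists (inr u).
Qed.

Lemma count_mem_le_card (T : finType) (A : {set T}) s :
  uniq s -> count (mem A) s <= #|A|.
Proof.
move=> Us; rewrite -size_filter cardE; apply: uniq_leq_size; first exact: filter_uniq.
by move=> x; rewrite mem_filter mem_enum => /andP[].
Qed.

Lemma count_le_card_witness (T : eqType) (V : finType) (s : seq T) (P : pred T)
    (R : T -> V -> bool) (B : {set V}) :
  uniq s -> (forall x, x \in s -> P x -> exists2 u, u \in B & R x u) ->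
  (forall x1 x2 u, x1 \in s -> x2 \in s -> P x1 -> P x2 -> R x1 u -> R x2 u -> x1 = x2) ->
  count P s <= #|B|.
Proof.
move=> Us wit uniq_wit; pose f x := [pick u in B | R x u].
have fP x : x \in s -> P x -> exists2 u, f x = Some u & (u \in B) && R x u.
  move=> xs Px; rewrite /f; case: pickP => [u uR | none]; first by exists u.
  by have [u uB Rxu] := wit x xs Px; move: (none u); rewrite uB Rxu.
rewrite -size_filter cardE -(size_map f) -(size_map Some (enum B)).
apply: uniq_leq_size.
  rewrite map_inj_in_uniq ?filter_uniq // => x1 x2.
  rewrite !mem_filter => /andP[P1 s1] /andP[P2 s2].
  case: (fP x1 s1 P1) (fP x2 s2 P2) => u1 -> /andP[_ R1] [u2 -> /andP[_ R2]] [u12].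
  by apply: (uniq_wit x1 x2 u1) => //; rewrite u12.
move=> y /mapP[x]; rewrite mem_filter => /andP[Px xs] ->.
by have [u -> /andP[uB _]] := fP x xs Px; rewrite map_f ?mem_enum.
Qed.

Lemma card_inl_inr (W U : finType) (S : {set (W + U)%type}) :
  #|[set w | inl w \in S]| + #|[set u | inr u \in S]| <= #|S|.
Proof.
rewrite -(card_imset _ (@inl_inj W U)) -(card_imset _ (@inr_inj W U)) -cardsUI.
have -> : (inl @: [set w | inl w \in S]) :&: (inr @: [set u | inr u \in S]) = finset.set0.
  by apply/setP => z; rewrite !inE; apply/negP => /andP[/imsetP[w _ ->] /imsetP[]].
rewrite cards0 addn0; apply/subset_leq_card/fintype.subsetP => z.
by rewrite inE => /orP[] /imsetP[w]; rewrite inE => wS ->.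
Qed.

Lemma ex_min_same_size (T : finType) (P : pred (seq T)) (f : seq T -> nat) s :
  P s -> exists2 s', P s' && (size s' == size s) &
    forall s2, P s2 -> size s2 = size s -> f s' <= f s2.
Proof.
move=> Ps; pose F (t : (size s).-tuple T) := f t.
case: (@arg_minnP _ (in_tuple s) (fun t => P t) F Ps) => m Pm m_min.
exists m; first by rewrite size_tuple eqxx andbT.
by move=> s2 P2 /eqP s2s; apply: (m_min (Tuple s2s)).
Qed.

Lemma count_predU_le (T : eqType) (a b : pred T) s :
  count (predU a b) s <= count a s + count b s.
Proof. by rewrite -count_predUI leq_addr. Qed.

Section MinimalCycle.
Variables (W U N : finType) (G : rel W) (r : W -> U -> bool).
Variables (root : N) (par : N -> N) (beta : N -> {set (W + U)%type}).
Hypothesis Gsym : symmetric G.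
Hypothesis Ghs : is_half_square_of G r.
Hypothesis td : tree_decomposition (bipE r) root par beta.
Local Notation desc := (descendant root par).
Local Notation gam := (gamma root par beta).
Local Notation dbag := (derived_bag r root par beta).

Definition pos (x : W) : N := home root beta (inl x).
Definition pos_dist (x y : W) : nat := tree_dist root par (pos x) (pos y).

Lemma pos_distC x y : pos_dist x y = pos_dist y x.
Proof. exact: tree_distC. Qed.

Definition exits t (x y : W) : bool :=
  [&& inl x \in gam t, inl y \notin gam t & inl x \notin beta t].

Lemma exits_pos t x y : exits t x y -> desc (pos x) t /\ ~~ desc (pos y) t.
Proof. by case/and3P=> xg yg xt; rewrite (home_desc td xg xt) (home_ndesc td yg). Qed.

Lemma exits_witness t x y :
  G x y -> exits t x y -> exists2 u, inr u \in beta t & r x u && r y u.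
Proof.
rewrite Ghs => /half_squareP[_ [u /andP[xu yu]]] /and3P[xg yg xt].
by exists u; rewrite ?xu ?yu // (common_neighbour_in_bag td xg xt yg (u := inr u)).
Qed.

Lemma crossing_edges_le c t :
  crossing_edges c (dbag t) (gamma root par dbag t) <=
  count (fun x => inl x \in beta t) c + count (fun x => inl (next c x) \in beta t) c +
  (count (fun x => exits t x (next c x)) c + count (fun x => exits t (next c x) x) c).
Proof.
apply: leq_trans (leq_add (count_predU_le _ _ _) (count_predU_le _ _ _)).
apply: leq_trans (count_predU_le _ _ _); apply: sub_count => x /=.
rewrite /exits gamma_derived_bag.
case/orP=> /andP[/derived_bag_sub_gamma xg]; rewrite inE => yg; rewrite xg yg /=;
  by case: (inl x \in beta t) (inl (next c x) \in beta t) => [] []; rewrite ?orbT.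
Qed.

Variable c : seq W.
Hypothesis c_cycle : is_cycle G c.
Hypothesis c_min : forall c2, is_cycle G c2 -> size c2 = size c ->
  cycle_weight pos_dist c <= cycle_weight pos_dist c2.

Lemma min_cycle_shared_witness x1 x2 u t b :
  x1 \in c -> x2 \in c ->
  r x1 u -> r (next c x1) u -> r x2 u -> r (next c x2) u ->
  desc (pos x1) t = b -> desc (pos x2) t = b ->
  desc (pos (next c x1)) t = ~~ b -> desc (pos (next c x2)) t = ~~ b ->
  x1 = x2.
Proof.
move=> x1c x2c r1 r1' r2 r2' d1 d2 d1' d2'.
case/andP: c_cycle => c_size /andP[c_path c_uniq].
have [//|x12] := eqVneq x1 x2; exfalso.
have y1x2 : next c x1 != x2 by apply/eqP => E; move: d1'; rewrite E d2; case: (b).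
have y2x1 : next c x2 != x1 by apply/eqP => E; move: d2'; rewrite E d1; case: (b).
have y12 : next c x1 != next c x2 by rewrite (inj_eq (can_inj (prev_next c_uniq))).
have Gx : G x1 x2 by rewrite Ghs; apply/half_squareP; split=> //; exists u; rewrite r1.
have Gy : G (next c x1) (next c x2).
  by rewrite Ghs; apply/half_squareP; split=> //; exists u; rewrite r1'.
have [c2 [c2_uniq c2_path c2_size] weight_eq] :=
  two_opt_exchange pos_distC Gsym c_uniq c_path x1c x2c x12 y1x2 y2x1 Gx Gy.
have c2_cycle : is_cycle G c2 by rewrite /is_cycle c2_size c_size /ucycleb c2_path.
have := c_min c2_cycle c2_size.
have : pos_dist x1 x2 + pos_dist (next c x1) (next c x2) <
       pos_dist x1 (next c x1) + pos_dist x2 (next c x2).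
  case: b d1 d2 d1' d2' => d1 d2 d1' d2'.
    by apply: (tree_dist_exchange (t := t)); rewrite ?d1 ?d2 ?d1' ?d2'.
  rewrite [X in X < _]addnC (pos_distC x1 (next c x1)) (pos_distC x2 (next c x2)).
  by apply: (tree_dist_exchange (t := t)); rewrite ?d1 ?d2 ?d1' ?d2'.
move=> lt; rewrite leqNgt => /negP; apply.
rewrite -(ltn_add2r (pos_dist x1 (next c x1) + pos_dist x2 (next c x2))).
by rewrite addnA weight_eq -addnA ltn_add2l.
Qed.

Lemma count_one_way_le (P : pred W) t b :
  (forall x, x \in c -> P x -> exists2 u, inr u \in beta t & r x u && r (next c x) u) ->
  (forall x, P x -> desc (pos x) t = b /\ desc (pos (next c x)) t = ~~ b) ->
  count P c <= #|[set u | inr u \in beta t]|.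
Proof.
move=> wit side; case/and3P: c_cycle => _ _ c_uniq.
apply: (count_le_card_witness (R := fun x u => r x u && r (next c x) u)) => //.
  by move=> x xc Px; have [u ut xu] := wit x xc Px; exists u; rewrite ?inE.
move=> x1 x2 u x1c x2c P1 P2 /andP[r1 r1'] /andP[r2 r2'].
have [d1 d1'] := side x1 P1; have [d2 d2'] := side x2 P2.
exact: min_cycle_shared_witness r1 r1' r2 r2' d1 d2 d1' d2'.
Qed.

Lemma min_cycle_crossing_le t :
  crossing_edges c (dbag t) (gamma root par dbag t) <= 2 * #|beta t|.
Proof.
case/and3P: c_cycle => _ c_path c_uniq.
pose A := [set w | inl w \in beta t]; pose B := [set u | inr u \in beta t].
have in_bag : count (fun x => inl x \in beta t) c <= #|A|.
  rewrite (eq_count (a2 := mem A)); first exact: count_mem_le_card.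
  by move=> x; rewrite /= inE.
have next_in_bag : count (fun x => inl (next c x) \in beta t) c <= #|A|.
  rewrite (eq_count (a2 := preim (next c) (mem A))); last by move=> x; rewrite /A /= inE.
  rewrite -count_map count_mem_le_card // map_inj_in_uniq //.
  exact: in2W (can_inj (prev_next c_uniq)).
have leaving : count (fun x => exits t x (next c x)) c <= #|B|.
  apply: (count_one_way_le (b := true)) => x.
    by move=> xc; apply: exits_witness; apply: next_cycle.
  by case/exits_pos => -> /negbTE ->.
have entering : count (fun x => exits t (next c x) x) c <= #|B|.
  apply: (count_one_way_le (b := false)) => x.
    move=> xc ex; have Gyx : G (next c x) x by rewrite Gsym; apply: next_cycle.
    by have [u ut /andP[yu xu]] := exits_witness Gyx ex; exists u; rewrite ?xu.
  by case/exits_pos => -> /negbTE ->.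
apply: leq_trans (crossing_edges_le c t) _.
have := card_inl_inr (beta t); rewrite -/A -/B; lia.
Qed.
End MinimalCycle.

Local Open Scope ring_scope.

Lemma double_bag_le (R : realType) (V N : finType) (beta : N -> {set V}) (k : nat) t :
  (0 < k)%N -> (td_width beta)%:~R < 5 * Num.sqrt (2 * k%:R) :> R ->
  (2 * #|beta t|)%N%:R <= 20 * Num.sqrt (2 * k%:R) :> R.
Proof.
move=> k_gt0; rewrite /td_width intrB; set q := Num.sqrt _ => width_lt.
have q_ge1 : 1 <= q by rewrite -sqrtr1 ler_wsqrtr // -natrM ler1n muln_gt0 k_gt0.
have bag_le : #|beta t|%:R <= (\max_s #|beta s|)%:R :> R.
  by rewrite ler_nat (leq_bigmax t).
rewrite natrM; lra.
Qed.

Theorem lemma25 (R : realType) (W U N : finType) (G : rel W) (r : W -> U -> bool)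
    (k : nat) (root : N) (par : N -> N) (beta : N -> {set (W + U)%type})
    (c : seq W) :
  simple_graph G ->
  is_half_square_of G r ->
  planar R (bipE r) ->
  (0 < k)%N ->
  nice_td (bipE r) root par beta ->
  (td_width beta)%:~R < 5 * Num.sqrt (2 * k%:R) :> R ->
  is_cycle G c ->
  exists c' : seq W,
    [/\ is_cycle G c', size c' = size c
      & forall t : N,
          (crossing_edges c' (derived_bag r root par beta t)
             (gamma root par (derived_bag r root par beta) t))%:R
          <= 20 * Num.sqrt (2 * k%:R) :> R].
Proof.
move=> [Gsym _] Ghs _ k_gt0 [td _ _] width_lt c_cycle.
have [c' /andP[c'_cycle /eqP c'_size] c'_min] :=
  ex_min_same_size (cycle_weight (pos_dist root par beta)) c_cycle.
exists c'; split=> // t; apply: le_trans (double_bag_le t k_gt0 width_lt).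
rewrite ler_nat (min_cycle_crossing_le Gsym Ghs td c'_cycle) // => c2.
by rewrite c'_size; apply: c'_min.
Qed.
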